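(* Let $\Omega\subset\mathbb H^n$ be an open, horizontally bounded and $H$-convex set. If $u:\overline\Omega\to\mathbb R$ is an $H$-convex function with $u=0$ on $\partial\Omega$, then $u\le0$. Moreover, if $\Omega$ is (Euclidean) convex, then either $u\equiv0$ on $\overline\Omega$, or $u<0$ in $\Omega$.
   Context: $\mathbb H^n=\mathbb C^n\times\mathbb R\cong\mathbb R^{2n+1}$ with real coordinates $(x,y,t)$, $z=x+iy$, group law $(z,t)\circ(z',t')=(z+z',t+t'+2\,\mathrm{Im}\langle z,z'\rangle)$, $\langle z,z'\rangle=\sum_j z_j\overline{z'_j}$. Dilations $\delta_\lambda(z,t)=(\lambda z,\lambda^2t)$. Horizontal plane at $\xi_0=(x_0,y_0,t_0)$: $H_{\xi_0}=\{(x,y,t):t=t_0+2(x\cdot y_0-x_0\cdot y)\}$. Gauge $N(z,t)=(|z|^4+t^2)^{1/4}$, $d_H(\xi,\zeta)=N(\zeta^{-1}\circ\xi)$, $\mathrm{diam}_H$ the $d_H$-diameter. A set $\tilde\Omega$ is $H$-convex if for all $\xi_1,\xi_2\in\tilde\Omega$ with $\xi_1\in H_{\xi_2}$ and $\lambda\in[0,1]$, $\xi_1\circ\delta_\lambda(\xi_1^{-1}\circ\xi_2)\in\tilde\Omega$; a function $u$ on $\tilde\Omega$ is $H$-convex if $u(\xi_1\circ\delta_\lambda(\xi_1^{-1}\circ\xi_2))\le(1-\lambda)u(\xi_1)+\lambda u(\xi_2)$ for all such $\xi_1,\xi_2,\lambda$. $\Omega$ is horizontally bounded if $\sup\{\mathrm{diam}_H(\Omega\cap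 H_\xi):\xi\in\Omega\}<\infty$. *)

From HB Require Import structures.
From mathcomp Require Import all_boot all_order all_algebra.
From mathcomp Require Import all_classical all_reals all_analysis.
Set Implicit Arguments.
Unset Strict Implicit.
Unset Printing Implicit Defensive.
Import Order.TTheory GRing.Theory Num.Theory.
Import numFieldNormedType.Exports.
Local Open Scope ring_scope.
Local Open Scope classical_set_scope.

(* the Heisenberg group H^n = C^n x R ~ R^(2n+1), z = x + i y,
   with the (Euclidean) product topology *)
Notation heis R n := ('rV[R]_n * 'rV[R]_n * R)%type.

Section Heis.
Variables (R : realType) (n : nat).
Local Notation heis := (heis R n).

Definition hx (p : heis) : 'rV[R]_n := p.1.1.
Definition hy (p : heis) : 'rV[R]_n := p.1.2.
Definition ht (p : heis) : R := p.2.

Definition dotv (a b : 'rV[R]_n) : R := \sum_(j < n) a 0 j * b 0 j.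

(* Im <z, z'> with <z,z'> = sum_j z_j conj(z'_j) *)
Definition im_herm (p q : heis) : R := dotv (hy p) (hx q) - dotv (hx p) (hy q).

(* group law (z,t) o (z',t') = (z+z', t+t'+2 Im<z,z'>) *)
Definition hmul (p q : heis) : heis :=
  ((hx p + hx q, hy p + hy q), ht p + ht q + 2 * im_herm p q).

Definition hinv (p : heis) : heis := ((- hx p, - hy p), - ht p).

Definition hdil (l : R) (p : heis) : heis := ((l *: hx p, l *: hy p), l ^+ 2 * ht p).

Definition hplane (xi0 : heis) : set heis :=
  [set p | ht p = ht xi0 + 2 * (dotv (hx p) (hy xi0) - dotv (hx xi0) (hy p))].

Definition gauge (p : heis) : R :=
  Num.sqrt (Num.sqrt ((dotv (hx p) (hx p) + dotv (hy p) (hy p)) ^+ 2 + ht p ^+ 2)).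

Definition dH (xi zeta : heis) : R := gauge (hmul (hinv zeta) xi).

Definition Hconvex_set (S : set heis) : Prop :=
  forall xi1 xi2 l, S xi1 -> S xi2 -> hplane xi2 xi1 -> 0 <= l <= 1 ->
    S (hmul xi1 (hdil l (hmul (hinv xi1) xi2))).

Definition Hconvex_fun (S : set heis) (u : heis -> R) : Prop :=
  forall xi1 xi2 l, S xi1 -> S xi2 -> hplane xi2 xi1 -> 0 <= l <= 1 ->
    S (hmul xi1 (hdil l (hmul (hinv xi1) xi2))) ->
    u (hmul xi1 (hdil l (hmul (hinv xi1) xi2))) <= (1 - l) * u xi1 + l * u xi2.

Definition horiz_bounded (S : set heis) : Prop :=
  exists M : R, forall xi a b, S xi -> (S `&` hplane xi) a -> (S `&` hplane xi) b ->
    dH a b <= M.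

Definition eucl_convex (S : set heis) : Prop :=
  forall a b (l : R), S a -> S b -> 0 <= l <= 1 ->
    S (((1 - l) *: hx a + l *: hx b, (1 - l) *: hy a + l *: hy b),
       (1 - l) * ht a + l * ht b).

Definition tboundary (S : set heis) : set heis := closure S `\` interior S.

End Heis.

From HB Require Import structures.
From mathcomp Require Import all_boot all_order all_algebra.
From mathcomp Require Import all_classical all_reals all_analysis.
From mathcomp Require Import ring lra.
Import Order.TTheory GRing.Theory Num.Theory.
Import numFieldNormedType.Exports.
Local Open Scope ring_scope.
Local Open Scope classical_set_scope.

Set Implicit Arguments.
Unset Strict Implicit.
Unset Printing Implicit Defensive.

(* Restricted to a horizontal line, an H-convex function is convex in the
   usual sense.  Horizontal boundedness forces every horizontal line through a
   point a of Omega to leave Omega on both sides, at boundary points where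
   u = 0; convexity on the segment joining them gives u a <= 0.  If moreover
   u a = 0, the same argument on the segment from any point b of the closure
   on the line through a to the exit point beyond a gives u b >= 0, so u
   vanishes along every horizontal segment starting at a.  Horizontal
   segments and their commutators reach every point near a while staying
   close to a, so the zero set of u is open and closed in Omega, hence all of
   Omega when Omega is connected, e.g. convex. *)

Section Paths.
Variables (R : realType) (T : topologicalType).

Lemma path_exits_open (O : set T) (L : R -> T) (a b : R) :
  open O -> continuous L -> a <= b -> O (L a) -> ~ O (L b) ->
  exists2 s, a < s & (closure O `\` O) (L s).
Proof.
move=> oO cL ab Oa Ob; apply: contrapT => noexit; apply: Ob.
have ab_a : `[a, b] a by rewrite /= in_itv /= lexx ab.
have ab_b : `[a, b] b by rewrite /= in_itv /= lexx ab.
suff : `[a, b] `&` L @^-1` O = `[a, b] by move/seteqP => [_ /(_ b ab_b) []].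
apply: segment_connected.
- by exists a.
- by exists (L @^-1` O) => //; move/continuousP : cL; apply.
exists (L @^-1` closure O).
  by move/continuous_closedP : cL; apply; exact: closed_closure.
apply/seteqP; split=> s [abs Ls]; split => //; first exact: subset_closure.
apply: contrapT => nOs; move: abs; rewrite /= in_itv /= => /andP[a_le_s _].
have [sa|a_s] := eqVneq s a; first by apply: nOs; rewrite sa.
by apply: noexit; exists s => //; rewrite lt_neqAle eq_sym a_s.
Qed.

Lemma path_locally_constant (P : T -> Prop) (g : R -> T) (a b : R) :
  a <= b -> continuous g ->
  (forall s, `[a, b] s -> \forall q \near g s, P (g s) <-> P q) ->
  P (g a) -> P (g b).
Proof.
move=> ab cg Pnear Pa.
have ab_a : `[a, b] a by rewrite /= in_itv /= lexx ab.
have ab_b : `[a, b] b by rewrite /= in_itv /= lexx ab.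
have near_g s : `[a, b] s -> \forall t \near s, P (g s) <-> P (g t).
  by move=> abs; exact: cg s _ (Pnear s abs).
suff : `[a, b] `&` (P \o g) = `[a, b] by move/seteqP => [_ /(_ b ab_b) []].
apply: segment_connected.
- by exists a.
- exists (P \o g)°; first exact: open_interior.
  apply/seteqP; split=> s [abs Ps]; split=> //; last exact: interior_subset.
  by apply: filterS (near_g s abs) => t /= <-.
exists (~` [set s | ~ P (g s)]°); first exact/open_closedC/open_interior.
apply/seteqP; split=> s [abs Ps]; split=> //.
  by move/interior_subset.
apply: contrapT => nPs; apply: Ps.
by apply: filterS (near_g s abs) => t /= [_ PtPs] /PtPs.
Qed.

End Paths.

Lemma continuous_lerp (R : realType) (V : normedModType R) (a b : V) :
  continuous (fun s : R => (1 - s) *: a + s *: b).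
Proof.
move=> s; apply: cvgD; apply: cvgZ; try exact: cvg_cst; try exact: cvg_id.
by apply: cvgB; [exact: cvg_cst | exact: cvg_id].
Qed.

Section DotProduct.
Variables (R : realType) (n : nat).
Implicit Types (v w z : 'rV[R]_n) (k : R).

Lemma dotvC v w : dotv v w = dotv w v.
Proof. by apply: eq_bigr => j _; rewrite mulrC. Qed.

Lemma dotvDl v w z : dotv (v + w) z = dotv v z + dotv w z.
Proof. by rewrite /dotv -big_split; apply: eq_bigr => j _; rewrite !mxE mulrDl. Qed.

Lemma dotvDr v w z : dotv z (v + w) = dotv z v + dotv z w.
Proof. by rewrite dotvC dotvDl !(dotvC z). Qed.

Lemma dotvZl k v w : dotv (k *: v) w = k * dotv v w.
Proof. by rewrite /dotv mulr_sumr; apply: eq_bigr => j _; rewrite !mxE mulrA. Qed.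

Lemma dotvZr k v w : dotv w (k *: v) = k * dotv w v.
Proof. by rewrite dotvC dotvZl dotvC. Qed.

Lemma dotvNl v w : dotv (- v) w = - dotv v w.
Proof. by rewrite -scaleN1r dotvZl mulN1r. Qed.

Lemma dotvNr v w : dotv w (- v) = - dotv w v.
Proof. by rewrite -scaleN1r dotvZr mulN1r. Qed.

Lemma dotv0r v : dotv v 0 = 0.
Proof. by rewrite -(scale0r 0) dotvZr mul0r. Qed.

Lemma dotvv_ge0 v : 0 <= dotv v v.
Proof. by apply: sumr_ge0 => j _; rewrite -expr2 sqr_ge0. Qed.

Lemma dotvv_eq0 v : dotv v v = 0 -> v = 0.
Proof.
move/eqP; rewrite psumr_eq0 => [/allP vv0|j _]; last by rewrite -expr2 sqr_ge0.
apply/rowP => j; rewrite mxE; apply/eqP.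
by have := vv0 j (mem_index_enum _); rewrite /= mulf_eq0 orbb.
Qed.

Lemma dotv_const1 : dotv (const_mx 1 : 'rV[R]_n) (const_mx 1) = n%:R.
Proof.
by rewrite /dotv; under eq_bigr do rewrite !mxE mulr1; rewrite sumr_const card_ord.
Qed.

Lemma continuous_dotv (T : topologicalType) (f g : T -> 'rV[R]_n) :
  continuous f -> continuous g -> continuous (fun x => dotv (f x) (g x)).
Proof.
move=> cf cg; apply: continuous_big => [|j _ x]; first exact: add_continuous.
by apply: cvgM; [exact: continuous_comp (cf x) (@coord_continuous R 1 n 0 j _)
                | exact: continuous_comp (cg x) (@coord_continuous R 1 n 0 j _)].
Qed.

End DotProduct.

Section HorizontalLines.
Variables (R : realType) (n : nat).
Local Notation H := (heis R n).
Implicit Types (p q : H) (v w : 'rV[R]_n).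

Definition hstep p v w : H :=
  ((hx p + v, hy p + w), ht p + 2 * (dotv (hy p) v - dotv (hx p) w)).

Lemma hmul_horizontal p v w : hmul p ((v, w), 0) = hstep p v w.
Proof. by rewrite /hmul /hstep /im_herm addr0. Qed.

Lemma hinv_hstep p v w : hmul (hinv p) (hstep p v w) = ((v, w), 0).
Proof.
case: p => [[x y] t]; rewrite /hmul /hinv /hstep /im_herm /hx /hy /ht /= !addKr.
by congr (_, _); rewrite !dotvDr !dotvNl (dotvC x y); ring.
Qed.

Lemma hsegment_hstep p v w l :
  hmul p (hdil l (hmul (hinv p) (hstep p v w))) = hstep p (l *: v) (l *: w).
Proof. by rewrite hinv_hstep /hdil /hx /hy /ht /= mulr0 hmul_horizontal. Qed.

Lemma hstep0 p : hstep p 0 0 = p.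
Proof. by case: p => [[x y] t]; rewrite /hstep !addr0 !dotv0r subrr mulr0 addr0. Qed.

Lemma hstepK p v w : hstep (hstep p v w) (- v) (- w) = p.
Proof.
case: p => [[x y] t]; rewrite /hstep /hx /hy /ht /= !addrK; congr (_, _).
by rewrite !dotvDl !dotvNr (dotvC w v); ring.
Qed.

Lemma hstep_scaleD p v w a b :
  hstep (hstep p (a *: v) (a *: w)) (b *: v) (b *: w) =
  hstep p ((a + b) *: v) ((a + b) *: w).
Proof.
case: p => [[x y] t]; rewrite /hstep /hx /hy /ht /= !scalerDl !addrA.
by congr (_, _); rewrite !dotvDl !dotvDr !dotvZl !dotvZr (dotvC v w); ring.
Qed.

Lemma heis_eta p : ((hx p, hy p), ht p) = p.
Proof. by case: p => [[]]. Qed.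

Definition hvert p c : H := ((hx p, hy p), ht p + c).

Lemma hvertD p c d : hvert (hvert p c) d = hvert p (c + d).
Proof. by rewrite /hvert /hx /hy /ht /= addrA. Qed.

Lemma hvert_to p q : hx p = hx q -> hy p = hy q -> hvert p (ht q - ht p) = q.
Proof. by rewrite /hvert => -> ->; rewrite addrC subrK heis_eta. Qed.

Lemma hcommutator_vertical p v w :
  hstep (hstep (hstep (hstep p v 0) 0 w) (- v) 0) 0 (- w) =
  hvert p (- (4 * dotv v w)).
Proof.
case: p => [[x y] t]; rewrite /hvert /hstep /hx /hy /ht /= !addr0 !addrK.
by congr (_, _); rewrite !dotv0r !dotvDl !dotvNr (dotvC w v); ring.
Qed.

Lemma hplane_sym p q : hplane p q -> hplane q p.
Proof. by rewrite /hplane /= => ->; ring. Qed.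

Lemma hstep_in_hplane p v w : hplane p (hstep p v w).
Proof.
case: p => [[x y] t]; rewrite /hplane /hstep /hx /hy /ht /=.
by rewrite !dotvDl !dotvDr (dotvC v y); ring.
Qed.

Lemma dH_hstep p v w : dH (hstep p v w) p = Num.sqrt (dotv v v + dotv w w).
Proof.
rewrite /dH hinv_hstep /gauge /hx /hy /ht /= expr0n addr0 sqrtr_sqr ger0_norm //.
by rewrite addr_ge0 ?dotvv_ge0.
Qed.

Lemma continuous_hx : continuous (@hx R n).
Proof. by move=> p; apply: (@continuous_comp _ _ _ fst fst); apply: cvg_fst. Qed.

Lemma continuous_hy : continuous (@hy R n).
Proof.
by move=> p; apply: (@continuous_comp _ _ _ fst snd); [apply: cvg_fst | apply: cvg_snd].
Qed.

Lemma continuous_ht : continuous (@ht R n).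
Proof. by move=> p; apply: cvg_snd. Qed.

Lemma continuous_heis (T : topologicalType) (f g : T -> 'rV[R]_n) (h : T -> R) :
  continuous f -> continuous g -> continuous h ->
  continuous (fun x => ((f x, g x), h x) : H).
Proof.
move=> cf cg ch x; apply: (@cvg_pair _ _ _ _ (nbhs (_ : _ * _)) (nbhs (_ : R))).
  by apply: (@cvg_pair _ _ _ _ (nbhs (_ : 'rV[R]_n)) (nbhs (_ : 'rV[R]_n)));
    [exact: cf | exact: cg].
exact: ch.
Qed.

Lemma continuous_hstep (T : topologicalType) (F : T -> H) (g h : T -> 'rV[R]_n) :
  continuous F -> continuous g -> continuous h ->
  continuous (fun x => hstep (F x) (g x) (h x)).
Proof.
move=> cF cg ch.
have cFx : continuous (@hx R n \o F).
  by move=> x; apply: continuous_comp; [exact: cF | exact: continuous_hx].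
have cFy : continuous (@hy R n \o F).
  by move=> x; apply: continuous_comp; [exact: cF | exact: continuous_hy].
have cFt : continuous (@ht R n \o F).
  by move=> x; apply: continuous_comp; [exact: cF | exact: continuous_ht].
apply: continuous_heis => x; [exact: cvgD (cFx x) (cg x) | exact: cvgD (cFy x) (ch x) |].
apply: cvgD (cFt x) _; apply: cvgM; first exact: cvg_cst.
by apply: cvgB; [exact: (continuous_dotv cFy cg) | exact: (continuous_dotv cFx ch)].
Qed.

Lemma tboundary_open (S : set H) : open S -> tboundary S = closure S `\` S.
Proof. by move=> /interior_id oS; rewrite /tboundary oS. Qed.

Lemma Hconvex_fun_hline (S : set H) (u : H -> R) a v w s1 s2 :
  Hconvex_fun S u -> 0 < s1 -> 0 < s2 -> S a ->
  S (hstep a (- s1 *: v) (- s1 *: w)) -> S (hstep a (s2 *: v) (s2 *: w)) ->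
  u a <= s2 / (s1 + s2) * u (hstep a (- s1 *: v) (- s1 *: w))
         + s1 / (s1 + s2) * u (hstep a (s2 *: v) (s2 *: w)).
Proof.
move=> convu s1_gt0 s2_gt0 Sa; set b := hstep a _ _ => Sb.
have s12_gt0 : 0 < s1 + s2 by rewrite addr_gt0.
have -> : hstep a (s2 *: v) (s2 *: w) = hstep b ((s1 + s2) *: v) ((s1 + s2) *: w).
  by rewrite /b hstep_scaleD addrA addNr add0r.
set l := s1 / (s1 + s2) => Sc.
have l01 : 0 <= l <= 1.
  by apply/andP; split; [rewrite divr_ge0 ?ltW | rewrite ler_pdivrMr // mul1r lerDl ltW].
have ab : hmul b (hdil l (hmul (hinv b)
                   (hstep b ((s1 + s2) *: v) ((s1 + s2) *: w)))) = a.
  rewrite hsegment_hstep !scalerA /l divfK ?gt_eqF //.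
  by rewrite /b hstep_scaleD addNr !scale0r hstep0.
have := convu _ _ _ Sb Sc (hplane_sym (hstep_in_hplane _ _ _)) l01.
rewrite ab => /(_ Sa).
suff -> : 1 - l = s2 / (s1 + s2) by [].
by rewrite /l; field; rewrite gt_eqF.
Qed.

End HorizontalLines.

Section Hconvex_boundary_zero.
Variables (R : realType) (n : nat) (Om : set (heis R n)) (u : heis R n -> R).
Local Notation H := (heis R n).
Hypotheses (Om_open : open Om) (Om_hbounded : horiz_bounded Om).
Hypotheses (u_Hconvex : Hconvex_fun (closure Om) u)
  (u_boundary : forall xi, tboundary Om xi -> u xi = 0).
Implicit Types (a p q : H) (v w : 'rV[R]_n).

Lemma hline_exits a v w : Om a -> 0 < dotv v v + dotv w w ->
  exists2 s, 0 < s & tboundary Om (hstep a (s *: v) (s *: w)).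
Proof.
move=> Oa; set N := _ + _ => N_gt0.
have [M OmM] := Om_hbounded.
pose L s := hstep a (s *: v) (s *: w).
have L_bounded r : Om (L r) -> r ^+ 2 * N <= M ^+ 2.
  move=> OLr; have := OmM a (L r) a Oa (conj OLr (hstep_in_hplane _ _ _)).
  have Oa_plane : hplane a a by have := hstep_in_hplane a 0 0; rewrite hstep0.
  move=> /(_ (conj Oa Oa_plane)); rewrite dH_hstep !dotvZl !dotvZr.
  have -> : r * (r * dotv v v) + r * (r * dotv w w) = r ^+ 2 * N by rewrite /N; ring.
  have rN_ge0 : 0 <= r ^+ 2 * N by rewrite mulr_ge0 ?sqr_ge0 ?ltW.
  by move=> le_M; rewrite -(sqr_sqrtr rN_ge0); have := sqrtr_ge0 (r ^+ 2 * N); nra.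
pose b := 1 + M ^+ 2 / N.
have b_out : ~ Om (L b).
  move=> /L_bounded; rewrite /b.
  have := divr_ge0 (sqr_ge0 M) (ltW N_gt0); set c := M ^+ 2 / N => c_ge0.
  have -> : M ^+ 2 = c * N by rewrite /c divfK ?gt_eqF.
  by nra.
have cL : continuous L.
  have cZ (z : 'rV[R]_n) : continuous (fun s : R => s *: z).
    by move=> s; apply: cvgZ; [exact: cvg_id | exact: cvg_cst].
  by apply: continuous_hstep; [move=> s; exact: cvg_cst | exact: cZ | exact: cZ].
have L0 : L 0 = a by rewrite /L !scale0r hstep0.
have [||s s_gt0 Ls] := path_exits_open (a := 0) Om_open cL _ _ b_out; rewrite ?L0 //.
  by rewrite addr_ge0 ?divr_ge0 ?sqr_ge0 ?ltW.
by exists s; rewrite // tboundary_open.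
Qed.

Lemma hline_exits_backward a v w : Om a -> 0 < dotv v v + dotv w w ->
  exists2 s, 0 < s & tboundary Om (hstep a (- s *: v) (- s *: w)).
Proof.
move=> Oa N_gt0; have [|s s_gt0] := hline_exits (v := - v) (w := - w) Oa.
  by rewrite !dotvNl !dotvNr !opprK.
by rewrite !scalerN -!scaleNr; exists s.
Qed.

Lemma u_eq0_closureD a : closure Om a -> ~ Om a -> u a = 0.
Proof. by move=> Ca nOa; rewrite u_boundary // tboundary_open. Qed.

Hypothesis n_gt0 : (0 < n)%N.

Lemma u_nonpos a : closure Om a -> u a <= 0.
Proof.
move=> Ca; have [Oa|nOa] := pselect (Om a); last by rewrite u_eq0_closureD.
pose e : 'rV[R]_n := const_mx 1.
have ee_gt0 : 0 < dotv e e + dotv e e by rewrite dotv_const1 addr_gt0 ?ltr0n.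
have [s2 s2_gt0 B2] := hline_exits Oa ee_gt0.
have [s1 s1_gt0 B1] := hline_exits_backward Oa ee_gt0.
have := Hconvex_fun_hline u_Hconvex s1_gt0 s2_gt0 Ca B1.1 B2.1.
by rewrite (u_boundary B1) (u_boundary B2) !mulr0 addr0.
Qed.

Lemma u_zero_hstep a v w : Om a -> u a = 0 -> closure Om (hstep a v w) ->
  u (hstep a v w) = 0.
Proof.
move=> Oa ua0 Cb.
have [N0|N_neq0] := eqVneq (dotv v v + dotv w w) 0.
  have vv_ge0 := dotvv_ge0 v; have ww_ge0 := dotvv_ge0 w.
  have v0 : v = 0 by apply: dotvv_eq0; lra.
  have w0 : w = 0 by apply: dotvv_eq0; lra.
  by rewrite v0 w0 hstep0.
have N_gt0 : 0 < dotv v v + dotv w w.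
  by rewrite lt_neqAle eq_sym N_neq0 addr_ge0 ?dotvv_ge0.
have [s s_gt0 Bs] := hline_exits_backward Oa N_gt0.
have Cb1 : closure Om (hstep a (1 *: v) (1 *: w)) by rewrite !scale1r.
have := Hconvex_fun_hline u_Hconvex s_gt0 ltr01 (subset_closure Oa) Bs.1 Cb1.
rewrite (u_boundary Bs) ua0 mulr0 add0r !scale1r => ub_ge0.
apply/le_anti; rewrite u_nonpos //=.
by move: ub_ge0; rewrite pmulr_rge0 // divr_gt0 // addr_gt0.
Qed.

Lemma u_zero_hstep_iff a v w : Om a -> Om (hstep a v w) ->
  u a = 0 <-> u (hstep a v w) = 0.
Proof.
move=> Oa Ob; split=> [ua0|ub0]; first exact: u_zero_hstep (subset_closure Ob).
rewrite -(hstepK a v w); apply: u_zero_hstep ub0 _ => //.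
by rewrite hstepK; exact: subset_closure.
Qed.

Lemma Om_nbhs p : Om p -> nbhs p Om.
Proof. by move=> Op; move: Om_open; rewrite openE; exact. Qed.

(* Intended reading: F q is joined to p by horizontal segments inside Om. *)
Definition zero_linked p (F : H -> H) :=
  [/\ continuous F, F p = p &
      \forall q \near p, Om (F q) /\ (u p = 0 <-> u (F q) = 0)].

Lemma zero_linked_cst p : Om p -> zero_linked p (fun=> p).
Proof.
move=> Op; split=> //; first by move=> q; exact: cvg_cst.
by apply: filterE => q; split.
Qed.

Lemma zero_linked_hstep p F (g h : H -> 'rV[R]_n) :
  zero_linked p F -> continuous g -> continuous h -> g p = 0 -> h p = 0 ->
  zero_linked p (fun q => hstep (F q) (g q) (h q)).
Proof.
move=> [cF Fp linkF] cg ch gp0 hp0.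
have Gp : hstep (F p) (g p) (h p) = p by rewrite Fp gp0 hp0 hstep0.
have Op : Om p by have [] := nbhs_singleton linkF; rewrite Fp.
have cG := continuous_hstep cF cg ch.
split=> //; have OG : \forall q \near p, Om (hstep (F q) (g q) (h q)).
  by apply: cG; rewrite Gp; exact: Om_nbhs.
apply: filterS2 linkF OG => q [OFq zero_iff] OGq; split=> //.
by rewrite zero_iff; exact: u_zero_hstep_iff.
Qed.

Lemma zero_linked_vertical p F (v w : H -> 'rV[R]_n) :
  zero_linked p F -> continuous v -> continuous w -> v p = 0 -> w p = 0 ->
  zero_linked p (fun q => hvert (F q) (- (4 * dotv (v q) (w q)))).
Proof.
move=> linkF cv cw vp0 wp0.
have c0 : continuous (fun _ : H => 0 : 'rV[R]_n) by move=> q; exact: cvg_cst.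
have cNv : continuous (fun q => - v q) by move=> q; exact: continuousN (cv q).
have cNw : continuous (fun q => - w q) by move=> q; exact: continuousN (cw q).
have Nvp0 : - v p = 0 by rewrite vp0 oppr0.
have Nwp0 : - w p = 0 by rewrite wp0 oppr0.
have := zero_linked_hstep (zero_linked_hstep (zero_linked_hstep
  (zero_linked_hstep linkF cv c0 vp0 erefl) c0 cw erefl wp0)
  cNv c0 Nvp0 erefl) c0 cNw erefl Nwp0.
by congr zero_linked; apply/funext => q; rewrite hcommutator_vertical.
Qed.

Lemma zero_linked_idfun p F : zero_linked p F -> F =1 id ->
  \forall q \near p, u p = 0 <-> u q = 0.
Proof. by move=> [_ _ linkF] Fid; apply: filterS linkF => q; rewrite Fid => -[]. Qed.

(* Move horizontally to the vertical line through q, then fix the height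
   defect D q with two commutators, one for each sign of D q. *)
Lemma u_zero_locally_constant p : Om p ->
  \forall q \near p, u p = 0 <-> u q = 0.
Proof.
move=> Op; pose e : 'rV[R]_n := const_mx 1.
pose C q := hstep p (hx q - hx p) (hy q - hy p).
have cdx : continuous (fun q => hx q - hx p).
  by move=> q; apply: cvgB; [exact: continuous_hx | exact: cvg_cst].
have cdy : continuous (fun q => hy q - hy p).
  by move=> q; apply: cvgB; [exact: continuous_hy | exact: cvg_cst].
have linkC : zero_linked p C.
  exact: zero_linked_hstep (zero_linked_cst Op) cdx cdy (subrr _) (subrr _).
have [cC _ _] := linkC.
pose D q := ht q - ht (C q).
have cD : continuous D.
  have cCt : continuous (@ht R n \o C).
    by move=> q; apply: continuous_comp; [exact: cC | exact: continuous_ht].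
  by move=> q; apply: cvgB; [exact: continuous_ht | exact: cCt].
have Dp0 : D p = 0 by rewrite /D /C !subrr hstep0 subrr.
pose c : R := 8 * n%:R.
have c_gt0 : 0 < c by rewrite mulr_gt0 ?ltr0n.
pose A q := Num.sqrt ((`|D q| + D q) / c).
pose B q := Num.sqrt ((`|D q| - D q) / c).
have cA : continuous A.
  have cP : continuous (fun q => (`|D q| + D q) / c).
    by move=> q; apply: cvgM (cvg_cst _); apply: cvgD (cvg_norm (cD q)) (cD q).
  by move=> q; rewrite /A; apply: continuous_comp; [exact: cP | exact: sqrt_continuous].
have cB : continuous B.
  have cP : continuous (fun q => (`|D q| - D q) / c).
    by move=> q; apply: cvgM (cvg_cst _); apply: cvgB (cvg_norm (cD q)) (cD q).
  by move=> q; rewrite /B; apply: continuous_comp; [exact: cP | exact: sqrt_continuous].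
have cZe (f : H -> R) : continuous f -> continuous (fun q => f q *: e).
  by move=> cf q; apply: continuousZ (cf q) (cvg_cst _).
have cNA : continuous (fun q => - A q) by move=> q; exact: continuousN (cA q).
have Ap0 : A p = 0 by rewrite /A Dp0 normr0 addr0 mul0r sqrtr0.
have Bp0 : B p = 0 by rewrite /B Dp0 normr0 subr0 mul0r sqrtr0.
apply: zero_linked_idfun
  (zero_linked_vertical (zero_linked_vertical linkC (cZe _ cA) (cZe _ cNA) _ _)
     (cZe _ cB) (cZe _ cB) _ _) _; rewrite ?Ap0 ?Bp0 ?oppr0 ?scale0r // => q.
have normD := ler_norm (D q); have := ler_norm (- D q); rewrite normrN => normND.
have sqrA : A q ^+ 2 = (`|D q| + D q) / c.
  by rewrite sqr_sqrtr // divr_ge0 //; [lra | exact: ltW].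
have sqrB : B q ^+ 2 = (`|D q| - D q) / c.
  by rewrite sqr_sqrtr // divr_ge0 //; [lra | exact: ltW].
have vertical :
    4 * dotv (A q *: e) (- A q *: e) + 4 * dotv (B q *: e) (B q *: e) = - D q.
  rewrite !dotvZl !dotvZr dotv_const1.
  transitivity (c / 2 * (B q ^+ 2 - A q ^+ 2)); first by rewrite /c; field.
  by rewrite sqrA sqrB; field; rewrite gt_eqF.
rewrite hvertD -opprD vertical opprK.
by apply: hvert_to; rewrite /C /hstep /hx /hy /= addrC subrK.
Qed.

Lemma u_zero_convex_propagates x0 : eucl_convex Om -> Om x0 -> u x0 = 0 ->
  forall q, Om q -> u q = 0.
Proof.
move=> convOm Ox0 ux0 q Oq.
pose g (s : R) : H :=
  (((1 - s) *: hx x0 + s *: hx q, (1 - s) *: hy x0 + s *: hy q),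
   (1 - s) * ht x0 + s * ht q).
have g0 : g 0 = x0.
  by rewrite /g subr0 !scale1r !scale0r mul1r mul0r !addr0 heis_eta.
have g1 : g 1 = q.
  by rewrite /g subrr !scale1r !scale0r mul1r mul0r !add0r heis_eta.
have cg : continuous g by apply: continuous_heis; exact: continuous_lerp.
rewrite -g1; apply: (path_locally_constant (P := fun p => u p = 0)) ler01 cg _ _.
  move=> s; rewrite /= in_itv /= => s01; apply: u_zero_locally_constant.
  exact: convOm.
by rewrite g0.
Qed.

End Hconvex_boundary_zero.

Theorem proposition2p4 (R : realType) (n : nat) (Omega : set (heis R n))
  (u : heis R n -> R) :
  (1 <= n)%N ->
  open Omega -> horiz_bounded Omega -> Hconvex_set Omega ->
  Hconvex_fun (closure Omega) u ->
  (forall xi, tboundary Omega xi -> u xi = 0) ->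
  (forall xi, closure Omega xi -> u xi <= 0) /\
  (eucl_convex Omega ->
     (forall xi, closure Omega xi -> u xi = 0) \/ (forall xi, Omega xi -> u xi < 0)).
Proof.
move=> n_gt0 Om_open Om_hbounded _ u_Hconvex u_boundary.
have u_le0 := u_nonpos Om_open Om_hbounded u_Hconvex u_boundary n_gt0.
split=> // convOm.
have [[x0 [Ox0 ux0]] | no_zero] := pselect (exists x0, Omega x0 /\ u x0 = 0).
  have u_eq0 := u_zero_convex_propagates Om_open Om_hbounded u_Hconvex u_boundary
                  n_gt0 convOm Ox0 ux0.
  left=> xi Cxi; have [Oxi|nOxi] := pselect (Omega xi); first exact: u_eq0.
  exact: (u_eq0_closureD Om_open u_boundary Cxi nOxi).
right=> xi Oxi; rewrite lt_neqAle u_le0 ?andbT; last exact: subset_closure.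
by apply/eqP => uxi0; apply: no_zero; exists xi.
Qed.
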